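(* Let $k_2,h,\alpha,l,L,k>0$ with $L>l$. Then the equation $$-\frac{k_2}{h}\,x=\frac{\tan(\alpha l x)+k\alpha\tan((L-l)x)}{k\alpha-\tan(\alpha l x)\tan((L-l)x)},\qquad x>0,$$ has infinitely many positive solutions $0<x_1<x_2<\cdots<x_n<\cdots$.
   Context: This is the eigenvalue equation arising from separation of variables for heat conduction in a two-material bar $[0,L]$ with interface at $x=l$, Dirichlet condition at $x=0$ and convective (Robin) condition with coefficient $h$ at $x=L$; here $k=k_1/k_2$ is the ratio of the thermal conductivities and $\alpha=\alpha_2/\alpha_1$ the ratio of the square roots of the thermal diffusivities of the two materials. Solutions are understood as points $x>0$ where the right-hand side is defined and equals the left-hand side. *)

From Stdlib Require Import Reals.
Open Scope R_scope.

(* x is a solution: the right-hand side is defined at x (both tangents are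
   defined, i.e. the cosines are nonzero, and the denominator is nonzero)
   and equals the left-hand side. *)
Definition is_solution (k2 h alpha l L k x : R) : Prop :=
  cos (alpha * l * x) <> 0 /\
  cos ((L - l) * x) <> 0 /\
  k * alpha - tan (alpha * l * x) * tan ((L - l) * x) <> 0 /\
  - (k2 / h) * x =
    (tan (alpha * l * x) + k * alpha * tan ((L - l) * x)) /
    (k * alpha - tan (alpha * l * x) * tan ((L - l) * x)).

From Stdlib Require Import Reals Lra Lia ClassicalEpsilon.
From Coquelicot Require Import Coquelicot.
Open Scope R_scope.

(* With c = k alpha and phase c u the continuous argument of (c cos u, sin u),
   the right-hand side equals tan (phase c (alpha l x) + (L - l) x) wherever it is
   defined, while the left-hand side is tan (- atan (k2 x / h)).  So x is a solution
   as soon as the total phase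
     phase c (alpha l x) + (L - l) x + atan (k2 x / h)
   is a multiple of PI and neither tan (alpha l x) nor tan ((L - l) x) has a pole
   at x.  The total phase is continuous and grows at least linearly, so it
   crosses every level n PI.  A crossing on a pole is "bad"; at a pole of
   tan (alpha l x) the phase equals alpha l x, and comparing the increments of the
   three increasing summands between crossings shows that two consecutive bad
   crossings lie on poles of different tangents, and that four consecutive bad
   crossings would force both alpha l < L - l and L - l < alpha l.  Hence among any
   four consecutive crossings one is a solution. *)

Definition phase (c u : R) : R :=
  u + atan ((1 - c) * sin u * cos u / (c * cos u ^ 2 + sin u ^ 2)).

Lemma weighted_sin_cos_sq_pos (c u : R) : 0 < c -> 0 < c * cos u ^ 2 + sin u ^ 2.
Proof. intros Hc; pose proof (sin2_cos2 u) as H1; unfold Rsqr in H1; nra. Qed.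

Lemma is_derive_phase (c u : R) :
  0 < c -> is_derive (phase c) u (c / (c ^ 2 * cos u ^ 2 + sin u ^ 2)).
Proof.
  intros Hc.
  pose proof (weighted_sin_cos_sq_pos c u Hc) as Hw.
  pose proof (weighted_sin_cos_sq_pos (c ^ 2) u ltac:(nra)) as Hw2.
  pose proof (sin2_cos2 u) as H1; unfold Rsqr in H1.
  unfold phase; auto_derive; [lra|].
  set (s := sin u) in *; set (co := cos u) in *; clearbody s co.
  field_simplify_eq; [|repeat split; nra].
  apply Rminus_diag_uniq.
  transitivity ((c ^ 3 * co ^ 2 + c * s ^ 2) * (s * s + co * co) * (s * s + co * co - 1));
    [ring | rewrite H1; ring].
Qed.

Lemma phase_increasing (c u v : R) : 0 < c -> u < v -> phase c u < phase c v.
Proof.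
  intros Hc Huv.
  apply (incr_function (phase c) m_infty p_infty
           (fun u => c / (c ^ 2 * cos u ^ 2 + sin u ^ 2))); simpl; auto.
  - intros x _ _; apply is_derive_phase, Hc.
  - intros x _ _; apply Rlt_gt, Rdiv_lt_0_compat; [exact Hc|].
    apply weighted_sin_cos_sq_pos; nra.
Qed.

Lemma phase_plus_PI (c u : R) : phase c (u + PI) = phase c u + PI.
Proof.
  unfold phase; rewrite neg_sin, neg_cos.
  replace ((1 - c) * - sin u * - cos u / (c * (- cos u) ^ 2 + (- sin u) ^ 2))
    with ((1 - c) * sin u * cos u / (c * cos u ^ 2 + sin u ^ 2))
    by (unfold Rdiv; f_equal; [ring | f_equal; ring]).
  ring.
Qed.

Lemma phase_diff_lt_PI (c u v : R) :
  0 < c -> u <= v -> phase c v - phase c u < PI -> v - u < PI.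
Proof.
  intros Hc Huv Hlt.
  destruct (Rlt_or_le (v - u) PI) as [H | H]; [exact H | exfalso].
  assert (Hle : phase c (u + PI) <= phase c v).
  { destruct (Req_dec (u + PI) v) as [E | E]; [rewrite E; lra|].
    left; apply phase_increasing; lra. }
  rewrite phase_plus_PI in Hle; lra.
Qed.

Lemma phase_cos_0 (c u : R) : cos u = 0 -> phase c u = u.
Proof.
  intros H; unfold phase; rewrite H.
  replace ((1 - c) * sin u * 0 / (c * 0 ^ 2 + sin u ^ 2)) with 0 by (unfold Rdiv; ring).
  rewrite atan_0; ring.
Qed.

Lemma phase_polar (c u : R) :
  0 < c -> exists K, 0 < K /\ cos (phase c u) = K * c * cos u /\ sin (phase c u) = K * sin u.
Proof.
  intros Hc; pose proof (weighted_sin_cos_sq_pos c u Hc) as Hw.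
  set (g := (1 - c) * sin u * cos u / (c * cos u ^ 2 + sin u ^ 2)).
  set (t := atan g).
  assert (Hct : 0 < cos t) by (pose proof (atan_bound g); apply cos_gt_0; unfold t; lra).
  assert (Hst : sin t = g * cos t).
  { pose proof (tan_atan g) as Ht; fold t in Ht; unfold tan in Ht; rewrite <- Ht; field; lra. }
  pose proof (sin2_cos2 u) as H1; unfold Rsqr in H1.
  exists (cos t / (c * cos u ^ 2 + sin u ^ 2)); split; [apply Rdiv_lt_0_compat; assumption|].
  unfold phase; fold g t; rewrite cos_plus, sin_plus, Hst; unfold g.
  set (s := sin u) in *; set (co := cos u) in *; clearbody s co.
  split; field_simplify_eq; try lra; apply Rminus_diag_uniq.
  - transitivity (c * co * cos t * (s * s + co * co - 1)); [ring | rewrite H1; ring].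
  - transitivity (s * cos t * (s * s + co * co - 1)); [ring | rewrite H1; ring].
Qed.

Lemma phase_add_polar (c u v : R) :
  0 < c -> cos u <> 0 -> cos v <> 0 ->
  exists K, 0 < K /\
    cos (phase c u + v) = K * cos u * cos v * (c - tan u * tan v) /\
    sin (phase c u + v) = K * cos u * cos v * (tan u + c * tan v).
Proof.
  intros Hc Hu Hv.
  destruct (phase_polar c u Hc) as [K [HK [Hcos Hsin]]].
  exists K; split; [exact HK|].
  rewrite cos_plus, sin_plus, Hcos, Hsin; unfold tan.
  split; field; auto.
Qed.

Lemma solution_of_phase_root (c m x u v : R) :
  0 < c -> cos u <> 0 -> cos v <> 0 -> sin (phase c u + v + atan (m * x)) = 0 ->
  c - tan u * tan v <> 0 /\ - m * x = (tan u + c * tan v) / (c - tan u * tan v).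
Proof.
  intros Hc Hu Hv Hroot.
  destruct (phase_add_polar c u v Hc Hu Hv) as [K [HK [Hcos Hsin]]].
  set (S := phase c u + v) in *; set (g := atan (m * x)) in *.
  assert (Hcg : 0 < cos g) by (pose proof (atan_bound (m * x)); apply cos_gt_0; unfold g; lra).
  assert (Hsg : sin g = m * x * cos g).
  { pose proof (tan_atan (m * x)) as Ht; fold g in Ht; unfold tan in Ht; rewrite <- Ht; field; lra. }
  assert (HsinS : sin S = - m * x * cos S).
  { rewrite sin_plus, Hsg in Hroot.
    apply (Rmult_eq_reg_r (cos g)); [lra | lra]. }
  assert (HcosS : cos S <> 0).
  { intro H0; pose proof (sin2_cos2 S) as H1; unfold Rsqr in H1.
    rewrite HsinS, H0 in H1; lra. }
  assert (HD : c - tan u * tan v <> 0) by (intro H0; apply HcosS; rewrite Hcos, H0; ring).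
  assert (HKuv : K * cos u * cos v <> 0)
    by (repeat apply Rmult_integral_contrapositive_currified; lra).
  assert (Hnum : tan u + c * tan v = - m * x * (c - tan u * tan v)).
  { apply (Rmult_eq_reg_l (K * cos u * cos v)); [|exact HKuv].
    rewrite <- Hsin, HsinS, Hcos; ring. }
  split; [exact HD|].
  rewrite Hnum; field; exact HD.
Qed.

Lemma cos_zeros_gap (u v : R) :
  cos u = 0 -> cos v = 0 -> u < v -> v - u = PI \/ 2 * PI <= v - u.
Proof.
  intros Hu Hv Huv.
  destruct (cos_eq_0_0 u Hu) as [i Hi]; destruct (cos_eq_0_0 v Hv) as [j Hj].
  assert (Hdiff : v - u = IZR (j - i) * PI) by (rewrite minus_IZR, Hi, Hj; ring).
  pose proof PI_RGT_0 as HPI.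
  assert (Hpos : (0 < j - i)%Z).
  { apply lt_IZR; apply (Rmult_lt_reg_r PI); [exact HPI | lra]. }
  destruct (Z.eq_dec (j - i) 1) as [E | E].
  - left; rewrite Hdiff, E; ring.
  - right; rewrite Hdiff; apply Rmult_le_compat_r; [lra|].
    apply IZR_le; lia.
Qed.

Lemma crossed_half_turns (a b d d' : R) :
  0 < a -> 0 < b -> a * d = PI -> b * d < PI -> b * d' = PI -> a * d' < PI -> False.
Proof.
  intros Ha Hb Had Hbd Hbd' Had'.
  assert (d' < d) by (apply (Rmult_lt_reg_l a); lra).
  assert (d < d') by (apply (Rmult_lt_reg_l b); lra).
  lra.
Qed.

Section TotalPhase.

Variables a b c m : R.
Hypotheses (Ha : 0 < a) (Hb : 0 < b) (Hc : 0 < c) (Hm : 0 < m).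

Definition total_phase (x : R) : R := phase c (a * x) + b * x + atan (m * x).

Lemma continuity_total_phase : continuity total_phase.
Proof.
  intros x; apply continuity_pt_filterlim, (ex_derive_continuous (V := R_NormedModule)).
  unfold total_phase, phase; auto_derive.
  pose proof (weighted_sin_cos_sq_pos c (a * x) Hc); lra.
Qed.

Lemma total_phase_lower_bound (x : R) : 0 <= x -> (a + b) * x - PI / 2 < total_phase x.
Proof.
  intros Hx; unfold total_phase, phase.
  pose proof (atan_bound ((1 - c) * sin (a * x) * cos (a * x) /
                          (c * cos (a * x) ^ 2 + sin (a * x) ^ 2))).
  assert (0 <= atan (m * x)).
  { rewrite <- atan_0; destruct (Req_dec x 0) as [-> | Hx0].
    - rewrite Rmult_0_r; lra.
    - left; apply atan_increasing; nra. }
  lra.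
Qed.

Lemma total_phase_reaches (x0 v : R) :
  0 <= x0 -> total_phase x0 < v -> exists y, x0 < y /\ total_phase y = v.
Proof.
  intros Hx0 Hv.
  set (x1 := x0 + (Rabs v + PI) / (a + b)).
  pose proof PI_RGT_0; pose proof (Rle_abs v); pose proof (Rabs_pos v).
  assert (Hx1 : (a + b) * x1 = (a + b) * x0 + (Rabs v + PI)) by (unfold x1; field; lra).
  assert (Hlt : x0 < x1).
  { unfold x1; assert (0 < (Rabs v + PI) / (a + b)) by (apply Rdiv_lt_0_compat; lra); lra. }
  pose proof (total_phase_lower_bound x1 ltac:(lra)).
  destruct (IVT (fun x => total_phase x - v) x0 x1) as [y [[Hy0 Hy1] Hy]].
  - intros x; apply continuity_pt_minus;
      [apply continuity_total_phase | apply continuity_pt_const; intros ? ?; reflexivity].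
  - exact Hlt.
  - lra.
  - nra.
  - exists y; split; [|lra].
    destruct Hy0 as [Hy0 | <-]; [exact Hy0 | lra].
Qed.

Lemma atan_mul_increasing (y y' : R) : y < y' -> atan (m * y) < atan (m * y').
Proof. intros H; apply atan_increasing; nra. Qed.

Lemma total_phase_cos_a_0_pair (y y' : R) :
  y < y' -> cos (a * y) = 0 -> cos (a * y') = 0 ->
  total_phase y' - total_phase y <= 2 * PI ->
  a * (y' - y) = PI /\ b * (y' - y) < PI /\ PI < total_phase y' - total_phase y.
Proof.
  intros Hy Hay Hay' Hgap; unfold total_phase in *.
  rewrite !phase_cos_0 in Hgap |- * by assumption.
  pose proof (atan_mul_increasing y y' Hy).
  destruct (cos_zeros_gap (a * y) (a * y') Hay Hay' ltac:(nra)) as [E | E]; nra.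
Qed.

Lemma total_phase_cos_b_0_pair (y y' : R) :
  y < y' -> cos (b * y) = 0 -> cos (b * y') = 0 ->
  total_phase y' - total_phase y <= 2 * PI ->
  b * (y' - y) = PI /\ a * (y' - y) < PI /\ PI < total_phase y' - total_phase y.
Proof.
  intros Hy Hby Hby' Hgap; unfold total_phase in *.
  pose proof (atan_mul_increasing y y' Hy).
  pose proof (phase_increasing c (a * y) (a * y') Hc ltac:(nra)).
  destruct (cos_zeros_gap (b * y) (b * y') Hby Hby' ltac:(nra)) as [E | E]; [|nra].
  repeat split; [nra | | nra].
  replace (a * (y' - y)) with (a * y' - a * y) by ring.
  apply (phase_diff_lt_PI c); nra.
Qed.

Lemma next_bad_root_cos_a_0 (y y' : R) :
  y < y' -> total_phase y' = total_phase y + PI -> cos (a * y) = 0 ->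
  cos (a * y') = 0 \/ cos (b * y') = 0 -> cos (b * y') = 0.
Proof.
  intros Hy Hstep Hay [Hay' | Hby']; [exfalso | exact Hby'].
  destruct (total_phase_cos_a_0_pair y y' Hy Hay Hay'); pose proof PI_RGT_0; lra.
Qed.

Lemma next_bad_root_cos_b_0 (y y' : R) :
  y < y' -> total_phase y' = total_phase y + PI -> cos (b * y) = 0 ->
  cos (a * y') = 0 \/ cos (b * y') = 0 -> cos (a * y') = 0.
Proof.
  intros Hy Hstep Hby [Hay' | Hby']; [exact Hay' | exfalso].
  destruct (total_phase_cos_b_0_pair y y' Hy Hby Hby'); pose proof PI_RGT_0; lra.
Qed.

Lemma no_four_bad_roots (y0 y1 y2 y3 : R) :
  y0 < y1 -> y1 < y2 -> y2 < y3 ->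
  total_phase y1 = total_phase y0 + PI -> total_phase y2 = total_phase y1 + PI ->
  total_phase y3 = total_phase y2 + PI ->
  cos (a * y0) = 0 \/ cos (b * y0) = 0 -> cos (a * y1) = 0 \/ cos (b * y1) = 0 ->
  cos (a * y2) = 0 \/ cos (b * y2) = 0 -> cos (a * y3) = 0 \/ cos (b * y3) = 0 -> False.
Proof.
  intros H01 H12 H23 E1 E2 E3 Bad0 Bad1 Bad2 Bad3; pose proof PI_RGT_0.
  assert (E02 : total_phase y2 - total_phase y0 <= 2 * PI) by lra.
  assert (E13 : total_phase y3 - total_phase y1 <= 2 * PI) by lra.
  destruct Bad0 as [A0 | B0].
  - pose proof (next_bad_root_cos_a_0 y0 y1 H01 E1 A0 Bad1) as B1.
    pose proof (next_bad_root_cos_b_0 y1 y2 H12 E2 B1 Bad2) as A2.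
    pose proof (next_bad_root_cos_a_0 y2 y3 H23 E3 A2 Bad3) as B3.
    destruct (total_phase_cos_a_0_pair y0 y2 ltac:(lra) A0 A2 E02) as [Pa [Pb _]].
    destruct (total_phase_cos_b_0_pair y1 y3 ltac:(lra) B1 B3 E13) as [Qb [Qa _]].
    exact (crossed_half_turns a b _ _ Ha Hb Pa Pb Qb Qa).
  - pose proof (next_bad_root_cos_b_0 y0 y1 H01 E1 B0 Bad1) as A1.
    pose proof (next_bad_root_cos_a_0 y1 y2 H12 E2 A1 Bad2) as B2.
    pose proof (next_bad_root_cos_b_0 y2 y3 H23 E3 B2 Bad3) as A3.
    destruct (total_phase_cos_b_0_pair y0 y2 ltac:(lra) B0 B2 E02) as [Pb [Pa _]].
    destruct (total_phase_cos_a_0_pair y1 y3 ltac:(lra) A1 A3 E13) as [Qa [Qb _]].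
    exact (crossed_half_turns b a _ _ Hb Ha Pb Pa Qa Qb).
Qed.

Lemma cos_neq_0_or_eq_0 (y : R) :
  (cos (a * y) <> 0 /\ cos (b * y) <> 0) \/ (cos (a * y) = 0 \/ cos (b * y) = 0).
Proof.
  destruct (Req_dec (cos (a * y)) 0); [tauto|].
  destruct (Req_dec (cos (b * y)) 0); tauto.
Qed.

Lemma exists_good_root (X : R) :
  0 <= X -> exists y, X < y /\ cos (a * y) <> 0 /\ cos (b * y) <> 0 /\ sin (total_phase y) = 0.
Proof.
  intros HX; pose proof PI_RGT_0.
  assert (Hstep : forall y, 0 <= y -> exists y', y < y' /\ total_phase y' = total_phase y + PI)
    by (intros y Hy; apply total_phase_reaches; lra).
  set (n0 := up (total_phase X / PI)).
  assert (Hn0 : total_phase X < IZR n0 * PI).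
  { destruct (archimed (total_phase X / PI)) as [Hup _]; fold n0 in Hup.
    apply (Rmult_lt_compat_r PI) in Hup; [|lra].
    unfold Rdiv in Hup; rewrite Rmult_assoc, Rinv_l, Rmult_1_r in Hup; lra. }
  destruct (total_phase_reaches X _ HX Hn0) as [y0 [H0 E0]].
  destruct (Hstep y0 ltac:(lra)) as [y1 [H01 E1]].
  destruct (Hstep y1 ltac:(lra)) as [y2 [H12 E2]].
  destruct (Hstep y2 ltac:(lra)) as [y3 [H23 E3]].
  assert (S0 : sin (total_phase y0) = 0) by (rewrite E0; apply sin_eq_0_1; eauto).
  assert (S1 : sin (total_phase y1) = 0) by (rewrite E1, neg_sin, S0; ring).
  assert (S2 : sin (total_phase y2) = 0) by (rewrite E2, neg_sin, S1; ring).
  assert (S3 : sin (total_phase y3) = 0) by (rewrite E3, neg_sin, S2; ring).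
  destruct (cos_neq_0_or_eq_0 y0) as [[G0 G0'] | Bad0]; [exists y0; repeat split; auto; lra|].
  destruct (cos_neq_0_or_eq_0 y1) as [[G1 G1'] | Bad1]; [exists y1; repeat split; auto; lra|].
  destruct (cos_neq_0_or_eq_0 y2) as [[G2 G2'] | Bad2]; [exists y2; repeat split; auto; lra|].
  destruct (cos_neq_0_or_eq_0 y3) as [[G3 G3'] | Bad3]; [exists y3; repeat split; auto; lra|].
  exfalso; exact (no_four_bad_roots y0 y1 y2 y3 H01 H12 H23 E1 E2 E3 Bad0 Bad1 Bad2 Bad3).
Qed.

End TotalPhase.

Lemma increasing_seq_of_unbounded (P : R -> Prop) :
  (forall X, 0 <= X -> exists y, X < y /\ P y) ->
  exists xs : nat -> R, (forall n, 0 < xs n) /\ (forall n, xs n < xs (S n)) /\ (forall n, P (xs n)).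
Proof.
  intros HP.
  destruct (choice (fun X y => 0 <= X -> X < y /\ P y)) as [f Hf].
  { intros X; destruct (Rle_dec 0 X) as [HX | HX].
    - destruct (HP X HX) as [y Hy]; exists y; auto.
    - exists 0; intros; contradiction. }
  set (xs := fix xs n := match n with O => f 0 | S n => f (xs n) end).
  assert (Hxs : forall n, 0 < xs n /\ P (xs n)).
  { induction n as [|n [IHpos _]]; simpl.
    - destruct (Hf 0 (Rle_refl 0)); auto.
    - destruct (Hf (xs n) ltac:(lra)); split; [lra | assumption]. }
  exists xs; repeat split; intros n; try apply Hxs.
  destruct (Hf (xs n)) as [Hlt _]; [left; apply Hxs | exact Hlt].
Qed.

Theorem theorem1 (k2 h alpha l L k : R) :
  0 < k2 -> 0 < h -> 0 < alpha -> 0 < l -> 0 < L -> 0 < k -> l < L ->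
  exists xs : nat -> R,
    (forall n, 0 < xs n) /\
    (forall n, xs n < xs (S n)) /\
    (forall n, is_solution k2 h alpha l L k (xs n)).
Proof.
  intros Hk2 Hh Halpha Hl HL Hk HlL.
  assert (Ha : 0 < alpha * l) by nra.
  assert (Hb : 0 < L - l) by lra.
  assert (Hc : 0 < k * alpha) by nra.
  assert (Hm : 0 < k2 / h) by (apply Rdiv_lt_0_compat; assumption).
  apply increasing_seq_of_unbounded; intros X HX.
  destruct (exists_good_root (alpha * l) (L - l) (k * alpha) (k2 / h) Ha Hb Hc Hm X HX)
    as [y [Hy [Hay [Hby Hroot]]]].
  destruct (solution_of_phase_root (k * alpha) (k2 / h) y (alpha * l * y) ((L - l) * y)
              Hc Hay Hby Hroot) as [Hden Heq].
  exists y; repeat split; assumption.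
Qed.
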